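(* If $f:\{0,1\}^n\to\{0,1\}^n$ is computable by polynomial-size circuits, length-preserving, and one-to-one on $\{0,1\}^n$ for infinitely many $n$, then $f$ does not have a super-core.
   Context: A predicate $b$ computable by polynomial-size circuits is a super-core of $f:\{0,1\}^n\to\{0,1\}^{m(n)}$ if there do not exist a nondeterministic polynomial-size circuit family $\mathcal{A}_1$ (accepting iff some witness gives output 1), a co-nondeterministic polynomial-size circuit family $\mathcal{A}_2$ (rejecting iff some witness gives output 0), a polynomial $p$ and infinitely many $n$ such that either $\Pr_{x\in\{0,1\}^n}[\mathcal{A}_1(f(x),1^n)=b(x)=0]+\tfrac12\Pr_{y\in\{0,1\}^{m(n)}}[\mathcal{A}_1(y,1^n)=1]\ge \tfrac12+\tfrac1{p(n)}$ or $\Pr_{x}[\mathcal{A}_2(f(x),1^n)=b(x)=1]+\tfrac12\Pr_{y}[\mathcal{A}_2(y,1^n)=0]\ge \tfrac12+\tfrac1{p(n)}$ (uniform distributions). *)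

From mathcomp Require Import all_boot all_order all_algebra.
Set Implicit Arguments. Unset Strict Implicit. Unset Printing Implicit Defensive.
Import Order.TTheory GRing.Theory Num.Theory.
Local Open Scope ring_scope.

(* Wires 0 .. k-1 carry the k input bits; gate number t (0-based) writes    *)
(* wire k+t and may read any earlier wire.  A reference to a wire that does *)
(* not exist (yet) reads [false].                                          *)
Inductive gate := GAnd of nat & nat | GOr of nat & nat | GNot of nat.

Record circuit := Circuit { gates : seq gate; outs : seq nat }.

Definition eval_gate (w : seq bool) (g : gate) : bool :=
  match g with
  | GAnd i j => nth false w i && nth false w j
  | GOr i j => nth false w i || nth false w j
  | GNot i => ~~ nth false w i
  end.

Definition wires (c : circuit) (x : seq bool) : seq bool :=
  foldl (fun w g => rcons w (eval_gate w g)) x (gates c).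

Definition ceval (c : circuit) (x : seq bool) : seq bool :=
  [seq nth false (wires c x) i | i <- outs c].

Definition cbit (c : circuit) (x : seq bool) : bool := nth false (ceval c x) 0.

Definition csize (c : circuit) : nat := (size (gates c) + size (outs c))%N.

Definition poly_bounded (s : nat -> nat) : Prop :=
  exists q : {poly int}, forall n : nat, (s n)%:Z <= q.[n%:Z].

Definition infinitely_often (P : nat -> Prop) : Prop :=
  forall N : nat, exists2 n : nat, (N <= n)%N & P n.

Definition poly_computable_fun (f : seq bool -> seq bool) : Prop :=
  exists C : nat -> circuit, poly_bounded (fun n => csize (C n)) /\
    forall (n : nat) (x : n.-tuple bool), ceval (C n) x = f x.

Definition poly_computable_pred (b : seq bool -> bool) : Prop :=
  exists C : nat -> circuit, poly_bounded (fun n => csize (C n)) /\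
    forall (n : nat) (x : n.-tuple bool), cbit (C n) x = b x.

(* The n-th circuit gets input (y, 1^n, w) with a witness w of length wit n *)
Record ndfamily := NDFamily { ndcirc : nat -> circuit; ndwit : nat -> nat }.

Definition nd_poly_size (A : ndfamily) : Prop :=
  poly_bounded (fun n => (csize (ndcirc A n) + ndwit A n)%N).

Definition nd_out (A : ndfamily) (n : nat) (y : seq bool) : bool :=
  [exists w : (ndwit A n).-tuple bool,
     cbit (ndcirc A n) (y ++ nseq n true ++ w)].

Definition cond_out (A : ndfamily) (n : nat) (y : seq bool) : bool :=
  [forall w : (ndwit A n).-tuple bool,
     cbit (ndcirc A n) (y ++ nseq n true ++ w)].

Definition Pr (k : nat) (P : pred (k.-tuple bool)) : rat :=
  (#|[pred x | P x]|)%:R / (2 ^ k)%:R.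

Definition super_core (f : seq bool -> seq bool) (m : nat -> nat)
    (b : seq bool -> bool) : Prop :=
  poly_computable_pred b /\
  ~ exists (A1 A2 : ndfamily) (p : {poly int}),
      [/\ nd_poly_size A1, nd_poly_size A2 &
      infinitely_often (fun n =>
        0 < p.[n%:Z] /\
        (Pr (fun x : n.-tuple bool => ~~ nd_out A1 n (f x) && ~~ b x)
           + 2^-1 * Pr (fun y : (m n).-tuple bool => nd_out A1 n y)
           >= 2^-1 + (p.[n%:Z])%:~R^-1
         \/
         Pr (fun x : n.-tuple bool => cond_out A2 n (f x) && b x)
           + 2^-1 * Pr (fun y : (m n).-tuple bool => ~~ cond_out A2 n y)
           >= 2^-1 + (p.[n%:Z])%:~R^-1))].

Definition has_super_core (f : seq bool -> seq bool) (m : nat -> nat) : Prop :=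
  exists b : seq bool -> bool, super_core f m b.

From mathcomp Require Import all_boot all_order all_algebra.
From mathcomp Require Import zify lra.
Set Implicit Arguments. Unset Strict Implicit. Unset Printing Implicit Defensive.
Import Order.TTheory GRing.Theory Num.Theory.

(* Given circuits Cf for f and Cb for a
   candidate predicate b, take the nondeterministic family
     A1(y) = exists w, f(w) = y /\ b(w)
   and the co-nondeterministic family
     A2(y) = forall w, ~ (f(w) = y /\ ~ b(w)).
   When f is injective on {0,1}^n we get A1(f x) = A2(f x) = b(x), and
   Pr_y[A1(y) = 1] = Pr_x[b x], Pr_y[A2(y) = 0] = Pr_x[~ b x].  Writing
   u = Pr[b], the two super-core advantages are (1-u) + u/2 and u + (1-u)/2;
   one of them is at least 3/4 = 1/2 + 1/4, so b fails with p = 4. *)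

Definition step (w : seq bool) (g : gate) : seq bool := rcons w (eval_gate w g).

Definition run (w : seq bool) (gs : seq gate) : seq bool := foldl step w gs.

Lemma wiresE c x : wires c x = run x (gates c).
Proof. by []. Qed.

Lemma size_run w gs : size (run w gs) = size w + size gs.
Proof.
elim: gs w => [|g gs IH] w /=; first by rewrite addn0.
by rewrite IH size_rcons addSnnS.
Qed.

Lemma nth_run w gs i : i < size w -> nth false (run w gs) i = nth false w i.
Proof.
elim: gs w => [|g gs IH] w //= hi.
by rewrite IH ?size_rcons 1?ltnW // /step nth_rcons hi.
Qed.

Lemma run_cat w gs1 gs2 : run w (gs1 ++ gs2) = run (run w gs1) gs2.
Proof. exact: foldl_cat. Qed.

Lemma run_rcons w gs g : run w (rcons gs g) = step (run w gs) g.
Proof. exact: foldl_rcons. Qed.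

Definition shift_gate (k : nat) (g : gate) : gate :=
  match g with
  | GAnd i j => GAnd (k + i) (k + j)
  | GOr i j => GOr (k + i) (k + j)
  | GNot i => GNot (k + i)
  end.

Lemma nth_cat_shift (pre s : seq bool) k :
  nth false (pre ++ s) (size pre + k) = nth false s k.
Proof. by rewrite nth_cat ltnNge leq_addr /= addKn. Qed.

Lemma run_shift pre x gs :
  run (pre ++ x) (map (shift_gate (size pre)) gs) = pre ++ run x gs.
Proof.
elim: gs x => [|g gs IH] x //=.
have -> : step (pre ++ x) (shift_gate (size pre) g) = pre ++ step x g.
  by rewrite /step rcons_cat; case: g => * /=; rewrite !nth_cat_shift.
exact: IH.
Qed.

Definition copy_gates (ps : seq nat) : seq gate := [seq GAnd p p | p <- ps].

Lemma run_copy w acc ps : all (fun p => p < size w) ps ->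
  run (w ++ acc) (copy_gates ps) = w ++ acc ++ [seq nth false w p | p <- ps].
Proof.
elim: ps acc => [|p ps IH] acc /=; first by rewrite cats0.
case/andP=> hp hps; rewrite /step /= andbb nth_cat hp rcons_cat.
by rewrite IH // -cats1 -catA.
Qed.

Definition call (L : nat) (ps : seq nat) (gs : seq gate) : seq gate :=
  copy_gates ps ++ map (shift_gate L) gs.

Lemma run_call w ps gs : all (fun p => p < size w) ps ->
  run w (call (size w) ps gs) = w ++ run [seq nth false w p | p <- ps] gs.
Proof.
move=> hps; rewrite /call run_cat.
by have := run_copy [::] hps; rewrite cats0 /= => ->; rewrite run_shift.
Qed.

Lemma size_call L ps gs : size (call L ps gs) = size ps + size gs.
Proof. by rewrite /call size_cat !size_map. Qed.

(* Padding a circuit for inputs of length [n] with one wire that is constantly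
   false (it reads itself, which does not exist yet); every output index can
   then be redirected to an existing wire. *)
Definition pad_gates (n : nat) (gs : seq gate) : seq gate :=
  let N := n + size gs in rcons gs (GAnd N N).

Lemma run_pad n gs x : size x = n -> run x (pad_gates n gs) = rcons (run x gs) false.
Proof.
move=> hx; rewrite /pad_gates run_rcons /step /=.
by rewrite nth_default // size_run hx.
Qed.

Definition out_wire (n : nat) (c : circuit) (i : nat) : nat :=
  let N := n + size (gates c) in
  let o := nth N (outs c) i in if o < N then o else N.

Lemma out_wire_lt n c i : out_wire n c i < n + size (pad_gates n (gates c)).
Proof. by rewrite /out_wire size_rcons addnS ltnS; case: ifP => [/ltnW|]. Qed.

Lemma nth_ceval n c x i : size x = n ->
  nth false (ceval c x) i = nth false (run x (pad_gates n (gates c))) (out_wire n c i).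
Proof.
move=> hx; rewrite run_pad // -wiresE /out_wire.
have hw : size (wires c x) = n + size (gates c) by rewrite wiresE size_run hx.
have [hi | hi] := ltnP i (size (outs c)); last first.
  rewrite [nth _ (ceval _ _) _]nth_default ?size_map // [nth _ (outs c) _]nth_default // ltnn.
  by rewrite nth_rcons hw ltnn eqxx.
rewrite /ceval (nth_map 0) // (set_nth_default (n + size (gates c)) 0 hi).
case: ifP => ho; first by rewrite nth_rcons hw ho.
by rewrite nth_rcons hw ltnn eqxx nth_default // hw leqNgt ho.
Qed.

Inductive bexp := BVar of nat | BNot of bexp | BAnd of bexp & bexp.

Fixpoint beval (w : seq bool) (e : bexp) : bool :=
  match e with
  | BVar i => nth false w i
  | BNot e1 => ~~ beval w e1
  | BAnd e1 e2 => beval w e1 && beval w e2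
  end.

Fixpoint bvars (e : bexp) : seq nat :=
  match e with
  | BVar i => [:: i]
  | BNot e1 => bvars e1
  | BAnd e1 e2 => bvars e1 ++ bvars e2
  end.

Fixpoint bnodes (e : bexp) : nat :=
  match e with
  | BVar _ => 0
  | BNot e1 => (bnodes e1).+1
  | BAnd e1 e2 => (bnodes e1 + bnodes e2).+1
  end.

Fixpoint compile (L : nat) (e : bexp) : seq gate * nat :=
  match e with
  | BVar i => ([::], i)
  | BNot e1 =>
      let c1 := compile L e1 in (rcons c1.1 (GNot c1.2), L + size c1.1)
  | BAnd e1 e2 =>
      let c1 := compile L e1 in
      let c2 := compile (L + size c1.1) e2 in
      (rcons (c1.1 ++ c2.1) (GAnd c1.2 c2.2), L + size c1.1 + size c2.1)
  end.

Lemma size_compile L e : size (compile L e).1 = bnodes e.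
Proof.
by elim: e L => [i|e IH|e1 IH1 e2 IH2] L //=; rewrite size_rcons ?size_cat ?IH ?IH1 ?IH2.
Qed.

Definition vars_below (k : nat) (e : bexp) : bool := all (fun i => i < k) (bvars e).

Lemma vars_below_run w gs e :
  vars_below (size w) e -> vars_below (size (run w gs)) e.
Proof. by apply: sub_all => i /= hi; rewrite size_run ltn_addr. Qed.

Lemma beval_run w gs e : vars_below (size w) e -> beval (run w gs) e = beval w e.
Proof.
elim: e => [i|e IH|e1 IH1 e2 IH2] /=; rewrite /vars_below /= ?all_cat.
- by rewrite andbT => /nth_run ->.
- by move=> /IH ->.
- by case/andP=> /IH1 -> /IH2 ->.
Qed.

Lemma compile_spec e w : vars_below (size w) e ->
  let c := compile (size w) e in
  c.2 < size (run w c.1) /\ nth false (run w c.1) c.2 = beval w e.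
Proof.
elim: e w => [i|e IH|e1 IH1 e2 IH2] w /=; rewrite /vars_below /= ?all_cat.
- by rewrite andbT.
- move=> /IH [hlt heval]; set c1 := compile _ e.
  rewrite run_rcons /step size_rcons size_run ltnS leqnn nth_rcons.
  by rewrite size_run ltnn eqxx /= heval.
- case/andP=> h1 h2; have [lt1 ev1] := IH1 w h1; set c1 := compile _ e1 in lt1 ev1 *.
  set W1 := run w c1.1.
  have hW1 : size W1 = size w + size c1.1 by rewrite size_run.
  have [lt2 ev2] := IH2 W1 (vars_below_run _ h2).
  rewrite hW1 in lt2 ev2; set c2 := compile _ e2 in lt2 ev2 *.
  rewrite beval_run // in ev2.
  rewrite run_rcons run_cat -/W1 /step size_rcons !size_run ltnS leqnn nth_rcons.
  by rewrite size_run -hW1 ltnn eqxx /= ev2 nth_run ?ev1.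
Qed.

Definition bnot_if (c : bool) (e : bexp) : bexp := if c then BNot e else e.

Definition bxnor (e1 e2 : bexp) : bexp :=
  BAnd (BNot (BAnd e1 (BNot e2))) (BNot (BAnd (BNot e1) e2)).

Definition eq_chain (prs : seq (nat * nat)) (e : bexp) : bexp :=
  foldr (fun pr acc => BAnd (bxnor (BVar pr.1) (BVar pr.2)) acc) e prs.

Lemma beval_bnot_if w c e : beval w (bnot_if c e) = c (+) beval w e.
Proof. by case: c. Qed.

Lemma beval_eq_chain w prs e : beval w (eq_chain prs e) =
  all (fun pr => nth false w pr.1 == nth false w pr.2) prs && beval w e.
Proof.
elim: prs => [|pr prs IH] //=; rewrite IH andbA; congr (_ && _).
by case: (nth false w pr.1); case: (nth false w pr.2).
Qed.

Lemma bvars_eq_chain k prs e :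
  all (fun pr => (pr.1 < k) && (pr.2 < k)) prs -> vars_below k e ->
  vars_below k (eq_chain prs e).
Proof.
elim: prs => [|pr prs IH] //= /andP [/andP [h1 h2] hprs] he.
by rewrite /vars_below /= h1 h2; apply: IH.
Qed.

Lemma bnodes_eq_chain prs e : bnodes (eq_chain prs e) = 8 * size prs + bnodes e.
Proof. by elim: prs => [|pr prs IH] //=; rewrite IH mulnS; lia. Qed.

Lemma eq_seq_nth (s t : seq bool) n : size s = n -> size t = n ->
  (s == t) = all (fun i => nth false s i == nth false t i) (iota 0 n).
Proof.
move=> hs ht; apply/eqP/allP => [-> i _ //|H].
apply: (@eq_from_nth _ false); first by rewrite hs ht.
by move=> i; rewrite hs => hi; apply/eqP/H; rewrite mem_iota.
Qed.

Lemma run_call2 w ps gs1 gs2 : all (fun p => p < size w) ps ->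
  let v := [seq nth false w p | p <- ps] in
  run w (call (size w) ps gs1 ++ call (size w + (size ps + size gs1)) ps gs2)
  = w ++ run v gs1 ++ run v gs2.
Proof.
move=> ps_below v; rewrite run_cat run_call //.
have -> : size w + (size ps + size gs1) = size (w ++ run v gs1).
  by rewrite size_cat size_run size_map.
rewrite run_call; last by apply: sub_all ps_below => p; rewrite size_cat => /ltn_addr.
rewrite -catA; congr (_ ++ (_ ++ run _ _)).
by apply/eq_in_map => p /(allP ps_below) hp; rewrite nth_cat hp.
Qed.

(* The checker reads inputs y ++ 1^n ++ w; the witness w sits on these wires. *)
Definition witness_pos (n : nat) : seq nat := [seq 2 * n + i | i <- iota 0 n].

Lemma size_witness_pos n : size (witness_pos n) = n.
Proof. by rewrite size_map size_iota. Qed.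

Lemma witness_wires n y w : size y = n -> size w = n ->
  let inp := y ++ nseq n true ++ w in
  all (fun p => p < size inp) (witness_pos n) /\
  [seq nth false inp p | p <- witness_pos n] = w.
Proof.
move=> hy hw inp; have hinp : size inp = 3 * n by rewrite !size_cat size_nseq hy hw; lia.
split; first by apply/allP => p /mapP [i]; rewrite mem_iota hinp => /andP [_ hi] ->; lia.
rewrite -map_comp -[RHS](mkseq_nth false w) hw; apply: eq_map => i /=.
have -> : 2 * n + i = size y + (size (nseq n true) + i) by rewrite size_nseq hy; lia.
by rewrite /inp !nth_cat_shift.
Qed.

(* After the input (3n wires) come the padded runs of [Cf] and [Cb] on the
   witness; the checker then evaluates
     no xor ((Cf(w) = y) && (ng xor Cb(w))). *)
Definition checker_expr (n : nat) (Cf Cb : circuit) (ng no : bool) : bexp :=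
  let L1 := 3 * n + (n + size (pad_gates n (gates Cf))) in
  bnot_if no (eq_chain [seq (3 * n + out_wire n Cf i, i) | i <- iota 0 n]
                       (bnot_if ng (BVar (L1 + out_wire n Cb 0)))).

Definition checker (n : nat) (Cf Cb : circuit) (ng no : bool) : circuit :=
  let gf := pad_gates n (gates Cf) in
  let gb := pad_gates n (gates Cb) in
  let L1 := 3 * n + (n + size gf) in
  let L2 := L1 + (n + size gb) in
  let c := compile L2 (checker_expr n Cf Cb ng no) in
  Circuit (call (3 * n) (witness_pos n) gf ++ call L1 (witness_pos n) gb ++ c.1)
          [:: c.2].

Lemma checker_expr_below n Cf Cb ng no :
  vars_below (3 * n + (n + size (pad_gates n (gates Cf))) +
              (n + size (pad_gates n (gates Cb))))
             (checker_expr n Cf Cb ng no).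
Proof.
set L1 := 3 * n + _; set L2 := L1 + _.
have hv c e : vars_below L2 (bnot_if c e) = vars_below L2 e by case: c.
rewrite /checker_expr -/L1 hv; apply: bvars_eq_chain.
- apply/allP => pr /mapP [i]; rewrite mem_iota /= => hi ->.
  have := out_wire_lt n Cf i; rewrite /L2 /L1 /=; lia.
- by rewrite hv /vars_below /= andbT /L2 ltn_add2l out_wire_lt.
Qed.

Lemma checker_spec n Cf Cb ng no y w : size y = n -> size w = n ->
  size (ceval Cf w) = n ->
  cbit (checker n Cf Cb ng no) (y ++ nseq n true ++ w)
  = no (+) ((ceval Cf w == y) && (ng (+) cbit Cb w)).
Proof.
move=> hy hw hfw; set inp := y ++ nseq n true ++ w.
have hinp : size inp = 3 * n by rewrite !size_cat size_nseq hy hw; lia.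
have [ps_below ps_sel] := witness_wires hy hw.
set gf := pad_gates n (gates Cf); set gb := pad_gates n (gates Cb).
set Wf := run w gf; set Wb := run w gb; set W := inp ++ Wf ++ Wb.
have hWf : size Wf = n + size gf by rewrite size_run hw.
have hW : size W = 3 * n + (n + size gf) + (n + size gb).
  by rewrite /W size_cat hinp size_cat hWf size_run hw addnA.
have run_prefix :
    run inp (call (3 * n) (witness_pos n) gf ++
             call (3 * n + (n + size gf)) (witness_pos n) gb) = W.
  by have := run_call2 gf gb ps_below; rewrite ps_sel size_witness_pos hinp.
have f_bit i : nth false W (3 * n + out_wire n Cf i) = nth false (ceval Cf w) i.
  by rewrite -hinp nth_cat_shift nth_cat hWf out_wire_lt (nth_ceval _ _ hw).
have y_bit i : i < n -> nth false W i = nth false y i.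
  by move=> hi; rewrite /W /inp -catA nth_cat hy hi.
have b_bit : nth false W (3 * n + (n + size gf) + out_wire n Cb 0) = cbit Cb w.
  by rewrite /cbit (nth_ceval _ _ hw) /W catA -hWf -hinp -size_cat nth_cat_shift.
have E_below := checker_expr_below n Cf Cb ng no; rewrite -/gf -/gb -hW in E_below.
have [_ hE] := compile_spec E_below.
have -> : cbit (checker n Cf Cb ng no) inp = beval W (checker_expr n Cf Cb ng no).
  by rewrite -hE /cbit /ceval /checker /= wiresE /= catA run_cat run_prefix hW.
rewrite beval_bnot_if beval_eq_chain beval_bnot_if /= -/gf b_bit all_map.
rewrite (eq_seq_nth hfw hy); congr (_ (+) (_ && _)); apply: eq_in_all => i.
by rewrite mem_iota /= f_bit => hi; rewrite y_bit.
Qed.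

Lemma checker_size n Cf Cb ng no :
  csize (checker n Cf Cb ng no) <= 10 * n + 5 + (csize Cf + csize Cb).
Proof.
rewrite /csize /checker /= size_cat size_call size_cat size_call size_witness_pos size_compile.
rewrite /checker_expr !size_rcons; case: no; case: ng;
  rewrite /= bnodes_eq_chain size_map size_iota /=; lia.
Qed.

Local Open Scope ring_scope.

Lemma poly_bounded_le (s t : nat -> nat) :
  (forall n, (s n <= t n)%N) -> poly_bounded t -> poly_bounded s.
Proof. by move=> hst [q hq]; exists q => n; apply: le_trans (hq n); rewrite lez_nat. Qed.

Lemma poly_bounded_add (s t : nat -> nat) :
  poly_bounded s -> poly_bounded t -> poly_bounded (fun n => s n + t n)%N.
Proof. by move=> [q1 h1] [q2 h2]; exists (q1 + q2) => n; rewrite hornerD PoszD lerD. Qed.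

Lemma poly_bounded_affine (a c : nat) : poly_bounded (fun n => a * n + c)%N.
Proof.
exists (a%:Z *: 'X + c%:Z%:P) => n.
by rewrite hornerD hornerZ hornerX hornerC PoszD PoszM.
Qed.

Definition checker_family (Cf Cb : nat -> circuit) (ng no : bool) : ndfamily :=
  NDFamily (fun n => checker n (Cf n) (Cb n) ng no) id.

Lemma checker_family_poly (Cf Cb : nat -> circuit) ng no :
  poly_bounded (fun n => csize (Cf n)) -> poly_bounded (fun n => csize (Cb n)) ->
  nd_poly_size (checker_family Cf Cb ng no).
Proof.
move=> hf hb; apply: (poly_bounded_le (t := fun n => 11 * n + 5 + (csize (Cf n) + csize (Cb n)))%N).
  by move=> n /=; have := checker_size n (Cf n) (Cb n) ng no; lia.
by apply: poly_bounded_add; [apply: poly_bounded_affine | apply: poly_bounded_add].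
Qed.

Lemma eq_Pr k (P Q : pred (k.-tuple bool)) : P =1 Q -> Pr P = Pr Q.
Proof. by move=> hPQ; rewrite /Pr (eq_card hPQ). Qed.

Lemma Pr_ge0 k (P : pred (k.-tuple bool)) : 0 <= Pr P.
Proof. by rewrite /Pr divr_ge0. Qed.

Lemma Pr_complement k (P : pred (k.-tuple bool)) : Pr P + Pr (fun x => ~~ P x) = 1.
Proof.
rewrite /Pr -mulrDl -natrD.
have -> : #|[pred x | ~~ P x]| = #|[predC [pred x | P x]]| by apply: eq_card.
by rewrite cardC card_tuple card_bool divff // pnatr_eq0 expn_eq0.
Qed.

Section InjectiveImage.
Variables (f : seq bool -> seq bool) (n : nat).
Hypothesis f_len : forall x, size (f x) = size x.
Hypothesis f_inj : forall x y : n.-tuple bool, f x = f y -> x = y.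

Definition image_of (q : seq bool -> bool) (y : seq bool) : bool :=
  [exists w : n.-tuple bool, (f w == y) && q w].

Let ft (x : n.-tuple bool) : n.-tuple bool := insubd x (f x).

Let val_ft x : val (ft x) = f x.
Proof. by rewrite val_insubd f_len size_tuple eqxx. Qed.

Let ft_inj : injective ft.
Proof. by move=> x y /(congr1 val); rewrite !val_ft => /f_inj. Qed.

Lemma image_of_f q (x : n.-tuple bool) : image_of q (f x) = q x.
Proof.
apply/existsP/idP => [[w /andP [/eqP /f_inj -> //]] | qx].
by exists x; rewrite eqxx.
Qed.

Lemma Pr_image_of q :
  Pr (fun y : n.-tuple bool => image_of q y) = Pr (fun x : n.-tuple bool => q x).
Proof.
have img : [pred y : n.-tuple bool | image_of q y] =i ft @: [set x : n.-tuple bool | q x].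
  move=> y; rewrite inE; apply/existsP/imsetP => [[w /andP [/eqP fw qw]] | [w]].
    by exists w; rewrite ?inE //; apply: val_inj; rewrite val_ft.
  by rewrite inE => qw ->; exists w; rewrite val_ft eqxx.
by rewrite /Pr (eq_card img) (card_imset _ ft_inj) cardsE.
Qed.

Lemma image_distinguisher_gap (b : seq bool -> bool) (A1 A2 : ndfamily) :
  (forall y, size y = n -> nd_out A1 n y = image_of b y) ->
  (forall y, size y = n -> ~~ cond_out A2 n y = image_of (fun x => ~~ b x) y) ->
  2^-1 + 4^-1 <= Pr (fun x : n.-tuple bool => ~~ nd_out A1 n (f x) && ~~ b x)
                 + 2^-1 * Pr (fun y : n.-tuple bool => nd_out A1 n y)
  \/
  2^-1 + 4^-1 <= Pr (fun x : n.-tuple bool => cond_out A2 n (f x) && b x)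
                 + 2^-1 * Pr (fun y : n.-tuple bool => ~~ cond_out A2 n y).
Proof.
move=> A1E A2E.
have fx_len (x : n.-tuple bool) : size (f x) = n by rewrite f_len size_tuple.
have A1f (x : n.-tuple bool) : nd_out A1 n (f x) = b x by rewrite A1E ?image_of_f.
have A2f (x : n.-tuple bool) : cond_out A2 n (f x) = b x.
  by rewrite -[LHS]negbK A2E ?image_of_f ?negbK.
rewrite (eq_Pr (Q := fun x => ~~ b x)) => [|x]; last by rewrite /= A1f andbb.
rewrite [X in _ \/ _ <= X + _](eq_Pr (Q := fun x => b x)) => [|x]; last by rewrite /= A2f andbb.
rewrite (eq_Pr (fun y => A1E y (size_tuple y))) (eq_Pr (fun y => A2E y (size_tuple y))).
rewrite !Pr_image_of.
have := Pr_complement (fun x : n.-tuple bool => b x).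
have := Pr_ge0 (fun x : n.-tuple bool => b x); have := Pr_ge0 (fun x : n.-tuple bool => ~~ b x).
set u := Pr (fun x : n.-tuple bool => b x); set v := Pr (fun x : n.-tuple bool => ~~ b x).
move=> v_ge0 u_ge0 uv1.
by case: (lerP u v) => h; [left | right]; lra.
Qed.
End InjectiveImage.

Section CheckerSemantics.
Variables (f : seq bool -> seq bool) (b : seq bool -> bool) (Cf Cb : nat -> circuit).
Hypothesis Cf_f : forall n (x : n.-tuple bool), ceval (Cf n) x = f x.
Hypothesis Cb_b : forall n (x : n.-tuple bool), cbit (Cb n) x = b x.
Hypothesis f_len : forall x, size (f x) = size x.

Lemma checker_family_cbit ng no n y (w : n.-tuple bool) : size y = n ->
  cbit (ndcirc (checker_family Cf Cb ng no) n) (y ++ nseq n true ++ w)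
  = no (+) ((f w == y) && (ng (+) b w)).
Proof.
move=> hy; rewrite /= checker_spec ?size_tuple ?Cf_f ?Cb_b //.
by rewrite f_len size_tuple.
Qed.

Lemma checker_nd_out n y : size y = n ->
  nd_out (checker_family Cf Cb false false) n y = image_of f n b y.
Proof. by move=> hy; apply: eq_existsb => w; rewrite checker_family_cbit. Qed.

Lemma checker_cond_out n y : size y = n ->
  ~~ cond_out (checker_family Cf Cb true true) n y = image_of f n (fun x => ~~ b x) y.
Proof.
move=> hy; rewrite /cond_out negb_forall; apply: eq_existsb => w.
by rewrite checker_family_cbit //= negbK.
Qed.
End CheckerSemantics.

Theorem corollary6p8 (f : seq bool -> seq bool) :
  poly_computable_fun f ->
  (forall x : seq bool, size (f x) = size x) ->
  infinitely_often (fun n => forall x y : n.-tuple bool, f x = f y -> x = y) ->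
  ~ has_super_core f (fun n => n).
Proof.
move=> [Cf [Cf_poly Cf_f]] f_len f_inj [b [[Cb [Cb_poly Cb_b]] no_distinguisher]].
apply: no_distinguisher.
exists (checker_family Cf Cb false false), (checker_family Cf Cb true true), 4%:P.
split; try exact: checker_family_poly.
move=> N; have [n leNn inj_n] := f_inj N; exists n => //.
rewrite hornerC; split => //.
apply: (image_distinguisher_gap f_len inj_n) => y hy.
- exact: checker_nd_out.
- exact: checker_cond_out.
Qed.
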